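(* Let $t,\ell,m$ be integers with $1 \le t \le \ell \le m$ and $\ell m\ge 2$. Then the minimum distance of the dual code $\widehat{C}_{\det}(t;\ell,m)^{\perp}$ equals $3$.
   Context: $q$ is a prime power. Let $\widehat{\mathcal D}_t(\ell,m)\subset\mathbb{P}^{\ell m-1}(\mathbb{F}_q)=\mathbb{P}(\mathrm{Mat}_{\ell\times m}(\mathbb{F}_q))$ be the set of points $[M]$ with $M\ne 0$ and $\mathrm{rk}(M)\le t$; let $\hat n=|\widehat{\mathcal D}_t(\ell,m)|$, enumerate its points and choose representatives $M_1,\dots,M_{\hat n}$. The determinantal code $\widehat{C}_{\det}(t;\ell,m)\subseteq\mathbb{F}_q^{\hat n}$ is the set of vectors $(f(M_1),\dots,f(M_{\hat n}))$ for $f$ ranging over linear forms in the entries of an $\ell\times m$ matrix of indeterminates. The dual code is its orthogonal complement in $\mathbb{F}_q^{\hat n}$ with respect to the standard dot product. *)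

From HB Require Import structures.
From mathcomp Require Import all_boot all_order all_algebra all_field.
Set Implicit Arguments. Unset Strict Implicit. Unset Printing Implicit Defensive.
Import GRing.Theory.
Local Open Scope ring_scope.

Section DetCode.
Variables (F : finFieldType) (l m n : nat).

(* [M] : 'I_n -> matrices is a choice of representatives of the points of the
   projective determinantal variety \hat D_t(l,m) in P(Mat_{l x m}(F)):
   every representative is a nonzero matrix of rank <= t, distinct indices give
   distinct projective points, and every projective point of rank <= t occurs. *)
Definition is_det_reps (t : nat) (M : 'I_n -> 'M[F]_(l, m)) : Prop :=
  [/\ (forall k, M k != 0 /\ (\rank (M k) <= t)%N),
      (forall k k' (a : F), k != k' -> M k' != a *: M k) &
      (forall A : 'M[F]_(l, m), A != 0 -> (\rank A <= t)%N ->
          exists k (a : F), A = a *: M k)].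

Definition lin_form (a X : 'M[F]_(l, m)) : F := \sum_i \sum_j a i j * X i j.

Definition det_codeword (M : 'I_n -> 'M[F]_(l, m)) (a : 'M[F]_(l, m)) : 'rV[F]_n :=
  \row_k lin_form a (M k).

Definition det_code (M : 'I_n -> 'M[F]_(l, m)) (v : 'rV[F]_n) : Prop :=
  exists a, v = det_codeword M a.

Definition dotv (u v : 'rV[F]_n) : F := \sum_k u 0 k * v 0 k.

Definition dual_code (C : 'rV[F]_n -> Prop) (c : 'rV[F]_n) : Prop :=
  forall v, C v -> dotv c v = 0.

Definition wt (c : 'rV[F]_n) : nat := #|[set k | c 0 k != 0]|.

Definition is_min_distance (C : 'rV[F]_n -> Prop) (d : nat) : Prop :=
  (exists c, [/\ C c, c != 0 & wt c = d]) /\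
  (forall c, C c -> c != 0 -> (d <= wt c)%N).

End DetCode.

(* Codewords of the dual code are exactly the linear relations
   sum_k c_k M_k = 0 among the chosen representatives, tested against the
   coordinate forms.  A relation with one or two nonzero coefficients would
   make some M_k zero or two of them proportional, i.e. two equal projective
   points; so the weight is at least 3.  Conversely E_11, E_12 and E_11 + E_12
   all have rank 1 <= t, so they are multiples of three pairwise distinct
   representatives, and E_11 + E_12 - (E_11 + E_12) = 0 is a relation of
   weight exactly 3. *)

From HB Require Import structures.
From mathcomp Require Import all_boot all_order all_algebra all_field.
From mathcomp Require Import zify.
Set Implicit Arguments. Unset Strict Implicit. Unset Printing Implicit Defensive.
Import GRing.Theory.
Local Open Scope ring_scope.

Section RowCombination.
Variables (F : fieldType) (V : lmodType F) (n : nat) (v : 'I_n -> V).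

Definition rowcomb (c : 'rV[F]_n) : V := \sum_k c 0 k *: v k.

Lemma rowcomb_is_linear : linear rowcomb.
Proof.
move=> a c d; rewrite /rowcomb scaler_sumr -big_split; apply: eq_bigr => k _.
by rewrite !mxE scalerDl scalerA.
Qed.

HB.instance Definition _ := GRing.isLinear.Build F 'rV[F]_n V *:%R rowcomb
  rowcomb_is_linear.

Lemma rowcomb_delta k : rowcomb (delta_mx 0 k) = v k.
Proof.
rewrite /rowcomb (bigD1 k) //= big1 ?addr0 => [|k' k'k].
  by rewrite mxE !eqxx scale1r.
by rewrite mxE eqxx (negbTE k'k) scale0r.
Qed.

Lemma rowcomb_support (c : 'rV[F]_n) :
  rowcomb c = \sum_(k in [set k | c 0 k != 0]) c 0 k *: v k.
Proof.
rewrite /rowcomb [RHS]big_mkcond; apply: eq_bigr => k _; rewrite inE.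
by case: eqP => [->|]; rewrite ?scale0r.
Qed.

Lemma scale_on_same_line k (b b' : F) (z z' : V) :
  z = b *: v k -> z' = b' *: v k -> b' *: z = b *: z'.
Proof. by move=> -> ->; rewrite !scalerA mulrC. Qed.

End RowCombination.

Section Weight.
Variables (F : finFieldType) (V : lmodType F) (n : nat) (v : 'I_n -> V).

Lemma wt_delta3 (k1 k2 k3 : 'I_n) (b1 b2 b3 : F) :
  [&& k1 != k2, k1 != k3 & k2 != k3] -> [&& b1 != 0, b2 != 0 & b3 != 0] ->
  wt (b1 *: delta_mx 0 k1 + b2 *: delta_mx 0 k2 + b3 *: delta_mx 0 k3) = 3%N.
Proof.
move=> /and3P[k12 k13 k23] /and3P[b1n b2n b3n].
rewrite /wt (_ : [set _ | _] = k1 |: [set k2; k3]).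
  by rewrite cardsU1 cards2 !inE negb_or k12 k13 k23.
apply/setP => k; rewrite !inE !mxE !eqxx /=.
have [->|_] := eqVneq k k1.
  by rewrite (negbTE k12) (negbTE k13) mulr1 !mulr0 !addr0.
have [->|_] := eqVneq k k2.
  by rewrite (negbTE k23) mulr1 !mulr0 add0r addr0.
have [_|_] := eqVneq k k3; first by rewrite mulr1 !mulr0 !add0r.
by rewrite !mulr0 !addr0 eqxx.
Qed.

Lemma exists_wt3_rowcomb_eq0 (P : V -> Prop) (x y : V) :
  (forall z, z != 0 -> P z -> exists k (b : F), z = b *: v k) ->
  (forall a b : F, a *: x + b *: y = 0 -> a = 0 /\ b = 0) ->
  P x -> P y -> P (x + y) ->
  exists c : 'rV[F]_n, rowcomb v c = 0 /\ wt c = 3%N.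
Proof.
move=> cover free Px Py Pxy.
have [x_neq0 y_neq0 xy_neq0] : [/\ x != 0, y != 0 & x + y != 0].
  split; apply/eqP => z0.
  - have /free[/eqP] : 1 *: x + 0 *: y = 0 by rewrite z0 scaler0 scale0r addr0.
    by rewrite oner_eq0.
  - have /free[_ /eqP] : 0 *: x + 1 *: y = 0 by rewrite z0 scaler0 scale0r addr0.
    by rewrite oner_eq0.
  - have /free[/eqP] : 1 *: x + 1 *: y = 0 by rewrite !scale1r z0.
    by rewrite oner_eq0.
have [k1 [b1 Ex]] := cover x x_neq0 Px.
have [k2 [b2 Ey]] := cover y y_neq0 Py.
have [k3 [b3 Exy]] := cover (x + y) xy_neq0 Pxy.
have b1_neq0 : b1 != 0 by apply: contra_neq x_neq0 => b0; rewrite Ex b0 scale0r.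
have b2_neq0 : b2 != 0 by apply: contra_neq y_neq0 => b0; rewrite Ey b0 scale0r.
have b3_neq0 : b3 != 0 by apply: contra_neq xy_neq0 => b0; rewrite Exy b0 scale0r.
have k12 : k1 != k2.
  apply/eqP => k12; subst k2; have E := scale_on_same_line Ex Ey.
  have /free[_ /eqP] : b2 *: x + (- b1) *: y = 0 by rewrite scaleNr E subrr.
  by rewrite oppr_eq0 (negbTE b1_neq0).
have k13 : k1 != k3.
  apply/eqP => k13; subst k3; have E := scale_on_same_line Ex Exy.
  have /free[_ /eqP] : (b3 - b1) *: x + (- b1) *: y = 0.
    by rewrite scalerBl E scalerDr scaleNr addrAC addrK subrr.
  by rewrite oppr_eq0 (negbTE b1_neq0).
have k23 : k2 != k3.
  apply/eqP => k23; subst k3; have E := scale_on_same_line Ey Exy.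
  have /free[/eqP] : (- b2) *: x + (b3 - b2) *: y = 0.
    by rewrite scalerBl E scalerDr scaleNr addrK addNr.
  by rewrite oppr_eq0 (negbTE b2_neq0).
exists (b1 *: delta_mx 0 k1 + b2 *: delta_mx 0 k2 + (- b3) *: delta_mx 0 k3); split.
  by rewrite !linearD !linearZ /= !rowcomb_delta -Ex -Ey scaleNr -Exy subrr.
by rewrite wt_delta3 ?k12 ?k13 ?k23 ?b1_neq0 ?b2_neq0 ?oppr_eq0 ?b3_neq0.
Qed.

Lemma wt0 : wt (0 : 'rV[F]_n) = 0%N.
Proof. by apply/eqP; rewrite cards_eq0; apply/eqP/setP => k; rewrite !inE mxE eqxx. Qed.

Hypothesis v_neq0 : forall k, v k != 0.
Hypothesis v_nonproportional : forall k k' (a : F), k != k' -> v k' != a *: v k.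

Lemma wt_ge3_of_rowcomb_eq0 (c : 'rV[F]_n) :
  rowcomb v c = 0 -> c != 0 -> (3 <= wt c)%N.
Proof.
rewrite rowcomb_support /wt => c0 c_neq0; set S := [set k | c 0 k != 0] in c0 *.
have S_neq0 : #|S| != 0%N.
  apply: contra c_neq0; rewrite cards_eq0 => /eqP S0; apply/eqP/rowP => k.
  by move/setP/(_ k): S0; rewrite !inE mxE => /negbFE/eqP.
have S_neq1 : #|S| != 1%N.
  apply/cards1P => -[k Sk]; have : k \in S by rewrite Sk set11.
  rewrite inE; move: c0; rewrite Sk big_set1 => /eqP.
  by rewrite scaler_eq0 (negbTE (v_neq0 k)) orbF => ->.
have S_neq2 : #|S| != 2%N.
  apply/cards2P => -[k [k' [kk' Sk]]]; have : k' \in S by rewrite Sk !inE eqxx orbT.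
  rewrite inE => ck'; move: c0; rewrite Sk big_setU1 ?inE // big_set1 => ck_ck'.
  have vk' : c 0 k' *: v k' = - (c 0 k *: v k).
    by apply/eqP; rewrite -addr_eq0 addrC ck_ck'.
  apply: (negP (v_nonproportional (- c 0 k / c 0 k') kk')).
  by rewrite mulrC -scalerA scaleNr -vk' scalerA mulVf ?scale1r.
by case: #|S| S_neq0 S_neq1 S_neq2 => [|[|[|]]].
Qed.

End Weight.

Section DeterminantalCode.
Variables (F : finFieldType) (l m n : nat).

Lemma lin_form_is_linear (a : 'M[F]_(l, m)) : scalar (lin_form a).
Proof.
move=> b X Y; rewrite /lin_form mulr_sumr -big_split; apply: eq_bigr => i _.
rewrite mulr_sumr -big_split; apply: eq_bigr => j _.
by rewrite !mxE mulrDr mulrCA.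
Qed.

HB.instance Definition _ (a : 'M[F]_(l, m)) :=
  GRing.isLinear.Build F 'M[F]_(l, m) F *%R (lin_form a) (lin_form_is_linear a).

Lemma lin_form_delta i j (X : 'M[F]_(l, m)) : lin_form (delta_mx i j) X = X i j.
Proof.
rewrite /lin_form (bigD1 i) //= [X in _ + X]big1 ?addr0 => [|i' i'i]; last first.
  by apply: big1 => j' _; rewrite mxE (negbTE i'i) mul0r.
rewrite (bigD1 j) //= big1 ?addr0 => [|j' j'j]; first by rewrite mxE !eqxx mul1r.
by rewrite mxE eqxx (negbTE j'j) mul0r.
Qed.

Lemma dotv_det_codeword (M : 'I_n -> 'M[F]_(l, m)) (c : 'rV[F]_n) a :
  dotv c (det_codeword M a) = lin_form a (rowcomb M c).
Proof. by rewrite linear_sum; apply: eq_bigr => k _; rewrite mxE linearZ. Qed.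

Lemma dual_det_codeP (M : 'I_n -> 'M[F]_(l, m)) (c : 'rV[F]_n) :
  dual_code (det_code M) c <-> rowcomb M c = 0.
Proof.
split=> [c_dual | c0 _ [a ->]]; last by rewrite dotv_det_codeword c0 linear0.
apply/matrixP => i j; rewrite mxE -(lin_form_delta i j).
by rewrite -dotv_det_codeword c_dual //; exists (delta_mx i j).
Qed.

End DeterminantalCode.

Section RowPairOfUnits.
Variables (F : fieldType) (l m : nat) (i : 'I_l) (j j' : 'I_m).

Lemma delta_mx_row_pair_free : j != j' -> forall a b : F,
  a *: delta_mx i j + b *: delta_mx i j' = 0 :> 'M[F]_(l, m) -> a = 0 /\ b = 0.
Proof.
move=> jj' a b /matrixP E; have := E i j; have := E i j'.
rewrite !mxE !eqxx (negbTE jj') eq_sym (negbTE jj') !mulr0 !mulr1 addr0 add0r.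
by move=> -> ->.
Qed.

Lemma mxrank_delta_row_pair :
  (\rank (delta_mx i j + delta_mx i j' : 'M[F]_(l, m))%R <= 1)%N.
Proof.
have -> : delta_mx i j + delta_mx i j' =
    delta_mx i (0 : 'I_1) *m (delta_mx 0 j + delta_mx 0 j') :> 'M[F]_(l, m).
  by rewrite mulmxDr !mul_delta_mx.
exact: leq_trans (mxrankM_maxl _ _) (rank_leq_col _).
Qed.

End RowPairOfUnits.

Theorem mainTheorem11 (F : finFieldType) (t l m n : nat)
    (M : 'I_n -> 'M[F]_(l, m)) :
  (1 <= t)%N -> (t <= l)%N -> (l <= m)%N -> (2 <= l * m)%N ->
  is_det_reps t M ->
  is_min_distance (dual_code (det_code M)) 3.
Proof.
move=> t_gt0 _ l_le_m lm_ge2 [M_neq0 M_nonproportional M_cover].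
have l_gt0 : (0 < l)%N by nia.
have m_gt1 : (1 < m)%N by nia.
pose i0 : 'I_l := Ordinal l_gt0.
pose j0 : 'I_m := Ordinal (ltnW m_gt1).
pose j1 : 'I_m := Ordinal m_gt1.
have cover (A : 'M[F]_(l, m)) :
    A != 0 -> (\rank A <= 1)%N -> exists k a, A = a *: M k.
  by move=> A_neq0 rkA; apply: M_cover A_neq0 (leq_trans rkA t_gt0).
split.
  have [|||c [c0 wt_c]] := exists_wt3_rowcomb_eq0 cover
      (delta_mx_row_pair_free (F := F) (i := i0) (isT : j0 != j1)).
  - by rewrite mxrank_delta.
  - by rewrite mxrank_delta.
  - exact: mxrank_delta_row_pair.
  exists c; split=> //; first exact/dual_det_codeP.
  by apply: contra_eqN wt_c => /eqP->; rewrite wt0.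
move=> c /dual_det_codeP c0; apply: wt_ge3_of_rowcomb_eq0 c0 => [k|].
  exact: (M_neq0 k).1.
exact: M_nonproportional.
Qed.
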